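(* Let $n$ be an odd positive integer and let $a,b$ be distinct integers with $0<a,b<n$, so that $G=C_{2n}(a,b,n)$ is a $5$-regular circulant graph. If $a$ and $b$ have the same parity (both even or both odd), then $G$ is word-representable.
   Context: Two distinct letters $x,y$ alternate in a word $w$ if, after deleting all other letters from $w$, the resulting word is of the form $xyxy\cdots$ or $yxyx\cdots$ (of even or odd length). A graph $G=(V,E)$ is word-representable if there is a word $w$ over the alphabet $V$, containing every letter of $V$ at least once, such that for all distinct $x,y\in V$, $xy\in E$ if and only if $x$ and $y$ alternate in $w$. For an integer $m$ and a set $R$ of positive integers each at most $m/2$, the circulant graph $C_m(R)$ has vertex set $\{0,1,\dots,m-1\}$, with $i$ and $j$ adjacent iff $\min(|i-j|,\,m-|i-j|)\in R$. $C_{2n}(a,b,n)$ denotes the circulant graph on $2n$ vertices with jump set $\{a,b,n\}$. *)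

From mathcomp Require Import all_boot.
Set Implicit Arguments. Unset Strict Implicit. Unset Printing Implicit Defensive.

(* Two distinct letters x, y alternate in w: after deleting all other letters,
   the resulting word has no two equal consecutive letters, i.e. it is
   xyxy... or yxyx... (of even or odd length). *)
Definition alternate (T : eqType) (w : seq T) (x y : T) : bool :=
  sorted (fun u v => u != v) [seq z <- w | (z == x) || (z == y)].

Definition word_representable (T : finType) (E : rel T) : Prop :=
  exists w : seq T, (forall x : T, x \in w) /\
    (forall x y : T, x != y -> (E x y <-> alternate w x y)).

Definition natdist (i j : nat) : nat := if i <= j then j - i else i - j.

Definition circulant (m : nat) (R : seq nat) : rel 'I_m :=
  fun i j => (i != j) &&
    (minn (natdist i j) (m - natdist i j) \in R).

From mathcomp Require Import all_boot zify ring.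
Set Implicit Arguments. Unset Strict Implicit. Unset Printing Implicit Defensive.

(* A graph is word-representable as soon as it admits a semi-transitive
   orientation (Halldorsson, Kitaev, Pyatkin); all orientations used here point
   edges upwards along a height function h.
   If a and b are odd, every jump is odd while 2n is even, so the parity of a
   vertex is such a height.
   If a = 2p and b = 2q, take h u = c * u mod 2n for an odd multiplier c such
   that c p and c q lie in the middle half (n/4, 3n/4) of Z_n; then c a, c b
   and c n = n lie in the middle half of Z_2n, so every edge spans between m
   and 2n - m with 4m > 2n.  A directed path of three or more edges then spans
   more than any edge, and semi-transitivity only has to be checked on paths of
   length at most two, where it is trivial.  Such a multiplier exists unless
   n = 5p and q = 2p; there the identity height works: edge spans are p times
   2, 4, 5, 6 or 8, and when an edge span is split as t1 + t2 + t3 by a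
   directed path, with each t_i a sum of these numbers and t2 > 0, then t2 is
   again in the list. *)

Definition restrict (T : eqType) (w : seq T) (x y : T) : seq T :=
  [seq z <- w | (z == x) || (z == y)].

Lemma restrictC (T : eqType) (w : seq T) x y : restrict w x y = restrict w y x.
Proof. by apply: eq_filter => z; rewrite orbC. Qed.

Definition uv_power (T : eqType) (u v : T) (s : seq T) : Prop :=
  exists k, s = flatten (nseq k [:: u; v]).

Lemma uv_power_cat (T : eqType) (u v : T) s1 s2 :
  uv_power u v s1 -> uv_power u v s2 -> uv_power u v (s1 ++ s2).
Proof. by move=> [k1 ->] [k2 ->]; exists (k1 + k2); rewrite nseqD flatten_cat. Qed.

Lemma uv_power_flatten (T : eqType) (u v : T) (ss : seq (seq T)) :
  (forall s, s \in ss -> uv_power u v s) -> uv_power u v (flatten ss).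
Proof.
elim: ss => [|s ss IH] ss_pow /=; first by exists 0.
apply: uv_power_cat; first by apply: ss_pow; rewrite mem_head.
by apply: IH => s' s'_in; apply: ss_pow; rewrite in_cons s'_in orbT.
Qed.

Lemma uv_power_alternating (T : eqType) (u v : T) s :
  u != v -> uv_power u v s -> sorted (fun x y => x != y) s.
Proof.
move=> uv [[|k] ->] //=; rewrite uv /=.
by elim: k => [|k IH] //=; rewrite eq_sym uv.
Qed.

Lemma infix_flatten (T : eqType) (s : seq T) (ss : seq (seq T)) :
  s \in ss -> infix s (flatten ss).
Proof. by case/splitPr=> ss1 ss2; rewrite flatten_cat /= infix_infix. Qed.

Lemma repeat_not_alternating (T : eqType) (a : T) s :
  infix [:: a; a] s -> ~~ sorted (fun x y => x != y) s.
Proof.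
case/infixP=> [[|b s1] [s2 ->]] /=; first by rewrite eqxx.
by rewrite cat_path /= eqxx !andbF.
Qed.

Section SemiTransitive.
Variables (T : finType) (E : rel T) (h : T -> nat).

Definition orient : rel T := fun u v => E u v && (h u < h v).

Definition semi_transitive : Prop :=
  forall a z x y, orient a z -> connect orient a x -> connect orient x y ->
    connect orient y z -> x != y -> E x y.

Lemma orient_path_span (m : nat) (u : T) (p : seq T) :
  (forall u v, orient u v -> m <= h v - h u) ->
  path orient u p -> h u + m * size p <= h (last u p).
Proof.
move=> span; elim: p u => [|v p IH] u /=; first by rewrite muln0 addn0.
case/andP=> uv /IH; have := span _ _ uv; case/andP: uv => _; rewrite mulnS; lia.
Qed.

Lemma connect_orient_lt (u v : T) : connect orient u v -> u != v -> h u < h v.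
Proof.
case/connectP=> [[|w p] pth ->]; first by rewrite eqxx.
have span1 x y : orient x y -> 1 <= h y - h x by case/andP=> _; lia.
by move=> _; have /= := orient_path_span span1 pth; lia.
Qed.

Lemma connect_orient_le (u v : T) : connect orient u v -> h u <= h v.
Proof. by case: (eqVneq u v) => [-> //|uv] /connect_orient_lt/(_ uv)/ltnW. Qed.

Definition by_height : seq T := sort (fun u v => h u <= h v) (enum T).

Definition block (S : pred T) : seq T := [seq z <- by_height | S z].

Lemma by_height_uniq : uniq by_height.
Proof. by rewrite sort_uniq enum_uniq. Qed.

Lemma mem_by_height (x : T) : x \in by_height.
Proof. by rewrite mem_sort mem_enum. Qed.

Lemma restrict_by_height (u v : T) : h u < h v -> restrict by_height u v = [:: u; v].
Proof.
move=> huv; have uv : u != v by apply: contraTneq huv => ->; rewrite ltnn.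
set s := restrict by_height u v.
have s_sorted : sorted (fun x y => h x <= h y) s.
  apply: sorted_filter; first by move=> y x z; apply: leq_trans.
  by apply: sort_sorted => x y; apply: leq_total.
have s_perm : perm_eq s [:: u; v].
  apply: uniq_perm; first exact: filter_uniq by_height_uniq.
    by rewrite /= inE uv.
  by move=> z; rewrite mem_filter mem_by_height andbT !inE.
move: s_perm s_sorted; rewrite -/s.
case: s => [|x [|y [|z t]]] s_perm; have //= := perm_size s_perm.
move=> _ /andP[hxy _].
have /andP[xy _] : uniq [:: x; y] by rewrite (perm_uniq s_perm) /= inE uv.
have : x \in [:: u; v] by rewrite -(perm_mem s_perm) mem_head.
have : y \in [:: u; v] by rewrite -(perm_mem s_perm) !inE eqxx orbT.
rewrite !inE => /orP[] /eqP ey /orP[] /eqP ex; subst x y; rewrite ?inE ?eqxx // in xy.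
by move: hxy; rewrite /= leqNgt huv.
Qed.

Lemma restrict_block (S : pred T) (u v : T) :
  h u < h v -> restrict (block S) u v = [seq z <- [:: u; v] | S z].
Proof.
move=> huv; rewrite /restrict /block -!filter_predI -(restrict_by_height huv).
by rewrite /restrict -filter_predI; apply: eq_filter => z /=; rewrite andbC.
Qed.

Lemma restrict_block_sep (S : pred T) (x y : T) :
  x != y -> S x -> ~~ S y -> restrict (block S) x y = [:: x].
Proof.
move=> xy Sx Sy; rewrite /restrict /block -filter_predI.
rewrite -(filter_pred1_uniq by_height_uniq (mem_by_height x)).
apply: eq_filter => z /=; case: (eqVneq z x) => [-> //|zx] /=.
by case: (eqVneq z y) => [->|] //=; rewrite (negbTE Sy).
Qed.

Definition down_closed (S : pred T) : Prop := forall u v, orient u v -> S v -> S u.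

Definition ancestors (x : T) : pred T := fun w => connect orient w x.

Definition shadow (x : T) : pred T := fun w =>
  [exists z, [|| connect orient z x | [exists a, connect orient a x && orient a z]]
               && connect orient w z].

Lemma ancestors_down_closed (x : T) : down_closed (ancestors x).
Proof. by move=> u v uv; apply: connect_trans; apply: connect1. Qed.

Lemma shadow_down_closed (x : T) : down_closed (shadow x).
Proof.
move=> u v uv /existsP[z /andP[zx vz]]; apply/existsP; exists z.
by rewrite zx; apply: connect_trans vz; apply: connect1.
Qed.

Lemma ancestors_sub_shadow (x w : T) : ancestors x w -> shadow x w.
Proof.
by move=> wx; apply/existsP; exists w; rewrite connect0 andbT; apply/orP; left.
Qed.

Lemma shadow_orient (x a z : T) : ancestors x a -> orient a z -> shadow x z.
Proof.
move=> ax az; apply/existsP; exists z; rewrite connect0 andbT.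
by apply/orP; right; apply/existsP; exists a; apply/andP.
Qed.

(* On an oriented edge u -> v, every [pair_word x y] restricts to uv or uvuv:
   [ancestors x] and [shadow x] are down-closed, and [shadow x] contains the
   out-neighbours of [ancestors x].  For a non-edge {x, y}, [pair_word x y] or
   [pair_word y x] restricts to xxyy or yxxy; when x reaches y it is
   semi-transitivity that keeps y out of [shadow x]. *)
Definition split_word (D : pred T) : seq T := block D ++ block (predC D).

Definition shadow_word (x : T) : seq T :=
  block (shadow x) ++ block (ancestors x) ++
  block (predC (shadow x)) ++ block (predC (ancestors x)).

Definition pair_word (x y : T) : seq T :=
  if connect orient x y then shadow_word x
  else split_word (ancestors y) ++ split_word (ancestors x).

Definition rep_word : seq T :=
  by_height ++ flatten [seq pair_word x y | x <- enum T, y <- enum T].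

Lemma restrict_split_word_orient (D : pred T) (u v : T) :
  down_closed D -> orient u v -> restrict (split_word D) u v = [:: u; v].
Proof.
move=> D_down uv; have /andP[_ huv] := uv.
rewrite /split_word /restrict filter_cat -!/(restrict _ u v) !restrict_block //=.
by have := D_down u v uv; case: (D u); case: (D v) => // /(_ isT).
Qed.

Lemma restrict_shadow_word_orient (x u v : T) :
  orient u v -> restrict (shadow_word x) u v = [:: u; v; u; v].
Proof.
move=> uv; have /andP[_ huv] := uv.
rewrite /shadow_word /restrict !filter_cat -!/(restrict _ u v) !restrict_block //=.
have Av_Au : ancestors x v ==> ancestors x u by apply/implyP/ancestors_down_closed.
have Sv_Su : shadow x v ==> shadow x u by apply/implyP/shadow_down_closed.
have Au_Su : ancestors x u ==> shadow x u by apply/implyP/ancestors_sub_shadow.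
have Au_Sv : ancestors x u ==> shadow x v by apply/implyP => /shadow_orient; apply.
move: Av_Au Sv_Su Au_Su Au_Sv.
by case: (ancestors x u); case: (ancestors x v); case: (shadow x u); case: (shadow x v).
Qed.

Lemma restrict_pair_word_orient (x y u v : T) :
  orient u v -> uv_power u v (restrict (pair_word x y) u v).
Proof.
move=> uv; exists 2; rewrite /pair_word; case: ifP => _.
  exact: restrict_shadow_word_orient.
by rewrite /restrict filter_cat -!/(restrict _ u v) !restrict_split_word_orient //;
  apply: ancestors_down_closed.
Qed.

Lemma restrict_rep_word_orient (u v : T) :
  orient u v -> uv_power u v (restrict rep_word u v).
Proof.
move=> uv; have /andP[_ huv] := uv.
rewrite /rep_word /restrict filter_cat -/(restrict _ u v) restrict_by_height //.
apply: (@uv_power_cat _ _ _ [:: u; v]); first by exists 1.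
rewrite filter_flatten; apply: uv_power_flatten.
move=> _ /mapP[w /allpairsP[[x y] [_ _ ->]] ->].
exact: restrict_pair_word_orient.
Qed.

Lemma not_shadow (x y : T) : semi_transitive -> connect orient x y -> x != y ->
  ~~ E x y -> ~~ shadow x y.
Proof.
move=> semiT xy x_neq_y nExy; apply/negP => /existsP[z /andP[]].
case/orP=> [zx yz | /existsP[a /andP[ax az]] yz].
  have := connect_orient_lt xy x_neq_y.
  by have := connect_orient_le (connect_trans yz zx); lia.
by move: nExy; rewrite (semiT a z x y).
Qed.

Lemma restrict_shadow_word_sep (x y : T) : semi_transitive -> connect orient x y ->
  x != y -> ~~ E x y -> restrict (shadow_word x) x y = [:: x; x; y; y].
Proof.
move=> semiT xy x_neq_y nExy.
have Ax : ancestors x x by exact: connect0.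
have Sy := not_shadow semiT xy x_neq_y nExy.
have Ay : ~~ ancestors x y by apply: contra Sy; apply: ancestors_sub_shadow.
have y_neq_x : y != x by rewrite eq_sym.
rewrite /shadow_word /restrict !filter_cat -!/(restrict _ x y).
rewrite restrict_block_sep ?(ancestors_sub_shadow Ax) // restrict_block_sep //.
by rewrite !(restrictC _ x y) !restrict_block_sep //= ?negbK ?(ancestors_sub_shadow Ax).
Qed.

Lemma restrict_split_word_sep (D : pred T) (x y : T) :
  x != y -> D x -> ~~ D y -> restrict (split_word D) x y = [:: x; y].
Proof.
move=> x_neq_y Dx Dy; have y_neq_x : y != x by rewrite eq_sym.
rewrite /split_word /restrict filter_cat -!/(restrict _ x y) restrict_block_sep //.
by rewrite restrictC restrict_block_sep //= negbK.
Qed.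

Lemma pair_word_repeat (x y : T) : semi_transitive -> x != y -> ~~ E x y -> symmetric E ->
  exists x' y' a, infix [:: a; a] (restrict (pair_word x' y') x y).
Proof.
move=> semiT x_neq_y nExy E_sym; have y_neq_x : y != x by rewrite eq_sym.
case xy: (connect orient x y).
  exists x, y, x; rewrite /pair_word xy restrict_shadow_word_sep //.
  exact: prefix_infix.
case yx: (connect orient y x).
  have nEyx : ~~ E y x by rewrite E_sym.
  exists y, x, y; rewrite /pair_word yx restrictC restrict_shadow_word_sep //.
  exact: prefix_infix.
have Axx : ancestors x x by exact: connect0.
have Ayy : ancestors y y by exact: connect0.
have nAxy : ~~ ancestors x y by rewrite /ancestors yx.
have nAyx : ~~ ancestors y x by rewrite /ancestors xy.
exists x, y, x; rewrite /pair_word xy /restrict filter_cat -!/(restrict _ x y).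
rewrite [restrict (split_word (ancestors y)) x y]restrictC !restrict_split_word_sep //.
exact: (infix_infix [:: y] [:: x; x] [:: y]).
Qed.

Lemma semi_transitive_of_span_window (m M : nat) : 0 < m -> M < 3 * m ->
  (forall u v, orient u v -> m <= h v - h u <= M) -> semi_transitive.
Proof.
move=> m_gt0 M_lt span a z x y az /connectP[p1 path1 x_eq].
move=> /connectP[p2 path2 y_eq] /connectP[p3 path3 z_eq] x_neq_y.
have span_m u v : orient u v -> m <= h v - h u by move=> /span /andP[].
have := orient_path_span span_m path1; have := orient_path_span span_m path2.
have := orient_path_span span_m path3; rewrite -x_eq -y_eq -z_eq.
have /andP[_ haz_M] := span a z az.
move=> h3 h2 h1; have : m * (size p1 + size p2 + size p3) < m * 3 by rewrite !mulnDr; lia.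
rewrite ltn_pmul2l // {h1 h2 h3}.
case: p2 path2 y_eq => [|w [|w' p2]] /= path2 y_eq short.
- by rewrite y_eq eqxx in x_neq_y.
- by rewrite y_eq; case/andP: path2 => /andP[].
case: p1 path1 x_eq short => [|? ?] _ x_eq short; last by move: short => /=; lia.
case: p3 path3 z_eq short => [|? ?] _ z_eq short; last by move: short => /=; lia.
by move: x_eq z_eq az => /= -> <- /andP[].
Qed.

Section ExactSpans.
Variable e : nat.
Hypothesis exact_spans : forall u v, h u < h v ->
  E u v <-> exists2 s, s \in [:: 2; 4; 5; 6; 8] & h v - h u = e * s.

Lemma connect_orient_span (u v : T) : connect orient u v ->
  exists2 t, h v = h u + e * t & t \notin [:: 1; 3].
Proof.
case/connectP=> p; elim: p u => [|w p IH] u /=.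
  by move=> _ ->; exists 0; rewrite ?muln0 ?addn0.
case/andP=> /andP[Euw huw] /IH /[apply] -[t hv t13].
have [s s_span hw] := (exact_spans huw).1 Euw.
exists (s + t); first by rewrite mulnDr; lia.
by move: s_span t13; rewrite !inE; lia.
Qed.

Lemma semi_transitive_of_exact_spans : 0 < e -> injective h -> semi_transitive.
Proof.
move=> e_gt0 h_inj a z x y /andP[Eaz haz] ax xy yz x_neq_y.
have [t1 hx t1_span] := connect_orient_span ax.
have [t2 hy t2_span] := connect_orient_span xy.
have [t3 hz t3_span] := connect_orient_span yz.
have [s s_span hs] := (exact_spans haz).1 Eaz.
have /eqP : e * s = e * (t1 + t2 + t3) by rewrite !mulnDr; lia.
rewrite eqn_pmul2l // => /eqP s_sum.
have t2_gt0 : 0 < t2.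
  rewrite lt0n; apply: contra_neq x_neq_y => t2_0.
  by apply: h_inj; rewrite hy t2_0 muln0 addn0.
apply/exact_spans; first by rewrite hy -[X in X < _]addn0 ltn_add2l muln_gt0 e_gt0.
exists t2; last by lia.
by move: s_span t1_span t2_span t3_span; rewrite !inE; lia.
Qed.

End ExactSpans.

End SemiTransitive.

Theorem semi_transitive_word_representable (T : finType) (E : rel T) (h : T -> nat) :
  symmetric E -> (forall u v, E u v -> h u != h v) -> semi_transitive E h ->
  word_representable E.
Proof.
move=> E_sym E_h semiT; exists (rep_word E h); split.
  by move=> x; rewrite mem_cat mem_by_height.
move=> x y x_neq_y; rewrite /alternate -/(restrict _ x y); split => [Exy | ].
  have := E_h x y Exy; rewrite neq_ltn => /orP[] hxy.
    apply: (uv_power_alternating x_neq_y).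
    by apply: restrict_rep_word_orient; rewrite /orient Exy.
  rewrite restrictC; apply: (@uv_power_alternating _ y x); first by rewrite eq_sym.
  by apply: restrict_rep_word_orient; rewrite /orient E_sym Exy.
apply: contraTT => nExy.
have [x' [y' [a rep]]] := pair_word_repeat semiT x_neq_y nExy E_sym.
apply: (@repeat_not_alternating _ a); apply: infix_trans rep _.
rewrite /rep_word /restrict filter_cat filter_flatten.
apply/infix_catl/infix_flatten.
by apply: map_f; apply: allpairs_f; rewrite mem_enum.
Qed.

Lemma modn_between (n z : nat) : n <= z < 2 * n -> z %% n = z - n.
Proof. by case/andP=> le_nz lt_z2n; rewrite -{1}(subnK le_nz) modnDr modn_small; lia. Qed.

Lemma mod_inverse (a m : nat) : 0 < a -> coprime a m -> exists i, a * i = 1 %[mod m].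
Proof.
move=> a_gt0 /(coprimeP _ a_gt0) [[u v] /= uv]; exists u.
have -> : a * u = v * m + 1 by rewrite mulnC; lia.
by rewrite modnMDl.
Qed.

Definition cdist (n x : nat) : nat := minn (x %% n) (n - x %% n).

Definition central (n x : nat) : bool := n < 4 * cdist n x.

Lemma cdist_mod (n x : nat) : cdist n (x %% n) = cdist n x.
Proof. by rewrite /cdist modn_mod. Qed.

Lemma central_mod (n x : nat) : central n (x %% n) = central n x.
Proof. by rewrite /central cdist_mod. Qed.

Lemma central_addMn (n x k : nat) : central n (x + k * n) = central n x.
Proof. by rewrite -central_mod addnC modnMDl central_mod. Qed.

Lemma cdist_small (n x : nat) : x < n -> cdist n x = minn x (n - x).
Proof. by move=> x_lt; rewrite /cdist modn_small. Qed.

Lemma modn_opp (n x y : nat) : x + y = 0 %[mod n] -> x %% n = (n - y %% n) %% n.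
Proof.
have [-> | n_gt0] := posnP n; first by rewrite !modn0; lia.
rewrite -modnDm mod0n => xy0.
have := ltn_mod x n; have := ltn_mod y n; rewrite n_gt0.
move: (x %% n) (y %% n) xy0 => s r xy0 r_lt s_lt.
case: (ltnP (s + r) n) => [sr_lt | sr_ge].
  rewrite modn_small // in xy0.
  have [-> ->] : s = 0 /\ r = 0 by lia.
  by rewrite subn0 modnn.
rewrite modn_between in xy0; last lia.
by rewrite modn_small; lia.
Qed.

Lemma cdist_opp (n x y : nat) : x + y = 0 %[mod n] -> cdist n x = cdist n y.
Proof.
move=> /modn_opp xy; rewrite -cdist_mod xy cdist_mod /cdist.
have [-> | n_gt0] := posnP n; first by rewrite !modn0; lia.
have := ltn_mod y n; rewrite n_gt0; case: (posnP (y %% n)) => [-> _ | r_gt0 r_lt].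
  by rewrite subn0 modnn; lia.
by rewrite modn_small; lia.
Qed.

Lemma central_opp (n x y : nat) : x + y = 0 %[mod n] -> central n x = central n y.
Proof. by move=> /cdist_opp xy; rewrite /central xy. Qed.

Lemma cdist_scale (e n x : nat) : cdist (e * n) (e * x) = e * cdist n x.
Proof. by rewrite /cdist -muln_modr -mulnBr minnMr. Qed.

Lemma central_scale (e n x : nat) : 0 < e -> central (e * n) (e * x) = central n x.
Proof. by move=> e_gt0; rewrite /central cdist_scale mulnCA ltn_pmul2l. Qed.

Lemma central_window (n x : nat) : n < 4 * x < 3 * n -> central n x.
Proof. by case/andP=> lo hi; rewrite /central cdist_small; lia. Qed.

Lemma central_half (n : nat) : 2 < n -> odd n -> central n n./2.
Proof.
move=> n_gt2 n_odd; apply: central_window.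
have : n = n./2.*2 + 1 by rewrite -[LHS]odd_double_half n_odd addnC.
by move: n./2 => k; lia.
Qed.

Lemma noncentral_shift (n y : nat) : 0 < n -> ~~ central n y ->
  (y + n %/ 4) %% n <= 2 * (n %/ 4).
Proof.
move=> n_gt0; rewrite /central /cdist -leqNgt -(modnDml y).
have := ltn_mod y n; rewrite n_gt0; move: (y %% n) => r r_lt r_far.
case: (leqP n (r + n %/ 4)) => [ge | lt]; first by rewrite modn_between; lia.
by rewrite modn_small; lia.
Qed.

Lemma noncentral_progression (n x d L : nat) : 0 < n -> 2 * d < n ->
  (forall j, j <= L -> ~~ central n (x + j * d)) -> 2 * (L * d) <= n.
Proof.
move=> n_gt0 d_lt far.
pose s j := (x + j * d + n %/ 4) %% n.
have s_le j : j <= L -> s j <= 2 * (n %/ 4) by move=> /far; apply: noncentral_shift.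
have s_step j : j < L -> s j.+1 = s j + d.
  move=> j_lt; rewrite /s.
  have -> : x + j.+1 * d + n %/ 4 = x + j * d + n %/ 4 + d by rewrite mulSn; lia.
  rewrite -modnDml modn_small //.
  by have := s_le j (ltnW j_lt); rewrite /s; lia.
have s_lin j : j <= L -> s j = s 0 + j * d.
  elim: j => [|j IH] j_le; first by rewrite addn0.
  by rewrite s_step // IH ?(ltnW j_le) // mulSn; lia.
by have := s_lin L (leqnn L); have := s_le L (leqnn L); lia.
Qed.

(* For n/4 < J < 3n/4 the multiplier J m makes p central; the values J d then
   form a walk of step d < n/2 in Z_n, which cannot jump over the central half
   and is too long to stay outside it. *)
Lemma central_multiplier_unit (n p q m : nat) : odd n -> 7 <= n ->
  (forall J, central n (p * (J * m)) = central n J) ->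
  1 < q * m %% n -> 2 * (q * m %% n) < n ->
  exists c, central n (p * c) && central n (q * c).
Proof.
move=> n_odd n_ge7 p_central; set d := q * m %% n => d_gt1 d_lt.
have n_mod2 : n %% 2 = 1 by rewrite modn2 n_odd.
set j0 := n %/ 4 + 1; set L := n %/ 2 - 1.
have q_central J : central n (q * (J * m)) = central n (J * d).
  by rewrite -[LHS]central_mod mulnCA -modnMmr central_mod.
case: (boolP [exists j : 'I_L.+1, central n ((j0 + j) * d)]).
  case/existsP=> j j_central; exists ((j0 + j) * m); rewrite q_central j_central andbT.
  by rewrite p_central; apply: central_window; have := ltn_ord j; lia.
rewrite negb_exists => /forallP far.
have : 2 * (L * d) <= n.
  apply: (@noncentral_progression n (j0 * d)) => // [|j j_le]; first lia.
  by rewrite -mulnDl; apply: (far (Ordinal (j_le : j < L.+1))).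
have : L * 2 <= L * d by rewrite leq_mul2l d_gt1 orbT.
lia.
Qed.

Lemma central_multiplier_coprime (n p q : nat) : odd n -> 7 <= n -> 0 < p -> p < q ->
  2 * q < n -> coprime p n -> exists c, central n (p * c) && central n (q * c).
Proof.
move=> n_odd n_ge7 p_gt0 pq q_lt p_coprime.
have n_mod2 : n %% 2 = 1 by rewrite modn2 n_odd.
have [m pm] := mod_inverse p_gt0 p_coprime.
have [k pmk] : exists k, p * m = k * n + 1.
  by exists (p * m %/ n); rewrite {1}(divn_eq (p * m) n) pm modn_small //; lia.
set d := q * m %% n.
have d_lt : d < n by rewrite ltn_mod; lia.
have dp : d * p = q %[mod n].
  by rewrite modnMml -mulnA [m * p]mulnC pmk mulnDr muln1 mulnA modnMDl.
have d_gt1 : 1 < d.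
  move: dp; rewrite (modn_small (_ : q < n)); last lia.
  by case: (d) => [|[|d']] //=; rewrite ?mul0n ?mul1n ?mod0n ?modn_small; lia.
have d_ne : d != n.-1.
  apply/eqP => d_eq; have : (q + p) %% n = 0.
    by rewrite -modnDml -dp modnDml -mulSnr d_eq prednK ?modnMr //; lia.
  by rewrite modn_small; lia.
case: (ltnP (2 * d) n) => [d_small | d_big].
  apply: (central_multiplier_unit (m := m)) => // J.
  by rewrite mulnCA pmk mulnDr muln1 addnC mulnA central_addMn.
have q_mod : q * (m * n.-1) %% n = n - d.
  have : q * (m * n.-1) + d = 0 %[mod n].
    rewrite /d modnDmr (_ : _ + _ = q * m * n.-1.+1); last by ring.
    by rewrite prednK ?modnMl ?mod0n //; lia.
  by move/modn_opp ->; rewrite !modn_small //; lia.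
have [d'_gt1 d'_lt] : 1 < q * (m * n.-1) %% n /\ 2 * (q * (m * n.-1) %% n) < n.
  by rewrite q_mod; lia.
apply: (central_multiplier_unit n_odd n_ge7 _ d'_gt1 d'_lt) => J; apply: central_opp.
have -> : p * (J * (m * n.-1)) + J = J * k * n.-1 * n + J * n.-1.+1.
  have -> : p * (J * (m * n.-1)) = J * n.-1 * (p * m) by ring.
  rewrite pmk; ring.
by rewrite prednK ?modnMDl ?modnMl ?mod0n //; lia.
Qed.

Lemma modn_mul_split (r a g X : nat) : r < a -> 0 < g ->
  (r + a * X) %% (a * g) = r + a * (X %% g).
Proof.
move=> r_lt g_gt0.
have -> : r + a * X = X %/ g * (a * g) + (r + a * (X %% g)).
  by rewrite {1}(divn_eq X g) mulnDr; ring.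
rewrite modnMDl modn_small //.
have : a * (X %% g).+1 <= a * g by rewrite leq_mul2l ltn_mod g_gt0 orbT.
by rewrite mulnS; lia.
Qed.

Lemma central_in_progression (r a g : nat) : r < a -> 2 < g ->
  exists2 u, u < g & central (a * g) (r + a * u).
Proof.
move=> r_lt g_gt2; set n := a * g.
set w := (n %/ 4 - r) %/ a.
have lo : w * a <= n %/ 4 - r by rewrite leq_divM.
have hi : n %/ 4 - r < w * a + a.
  by rewrite {1}(divn_eq (n %/ 4 - r) a) ltn_add2l ltn_mod; lia.
have n_ge : 3 * a <= n by rewrite /n [a * g]mulnC leq_mul2r g_gt2 orbT.
have window : n < 4 * (r + a * w.+1) < 3 * n.
  by rewrite mulnS mulnC; move: (w * a) lo hi => W; lia.
exists w.+1; last exact: central_window.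
by rewrite -(ltn_pmul2l (_ : 0 < a)) -/n; lia.
Qed.

Lemma coprime_affine_solution (p g s u : nat) : 0 < p -> 0 < g -> coprime p g ->
  exists k, s + p * k = u %[mod g].
Proof.
move=> p_gt0 g_gt0 p_coprime; have [i pi] := mod_inverse p_gt0 p_coprime.
exists (i * (u + g - s %% g)); rewrite mulnA -modnDmr -modnMml pi modnMml mul1n modnDmr.
have -> : s + (u + g - s %% g) = s %/ g * g + (u + g).
  have := ltn_mod s g; rewrite g_gt0 => s_lt; rewrite {1}(divn_eq s g).
  by move: (s %/ g * g) (s %% g) s_lt => A B; lia.
by rewrite modnMDl modnDr.
Qed.

(* Choose c modulo n2 so that g q1 c = g (n2 - 1)/2 mod g n2.  Adding
   multiples of n2 to c keeps this, and, p being a unit modulo g, moves p c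
   through all g residues modulo g n2 in its class modulo n2, one of which is
   central. *)
Lemma central_multiplier_common_factor (g n2 p q1 : nat) : odd (g * n2) -> 1 < g ->
  0 < p -> 0 < q1 -> 2 * q1 < n2 -> coprime p g -> coprime q1 n2 ->
  exists c, central (g * n2) (p * c) && central (g * n2) (g * q1 * c).
Proof.
rewrite oddM => /andP[g_odd n2_odd] g_gt1 p_gt0 q1_gt0 q1_lt p_coprime q1_coprime.
have g_gt2 : 2 < g by case: (g) g_odd g_gt1 => [|[|[|]]].
have [i2 q1i2] := mod_inverse q1_gt0 q1_coprime.
set c2 := i2 * n2./2.
have q_central k : central (g * n2) (g * q1 * (c2 + n2 * k)).
  rewrite -mulnA central_scale 1?ltnW // -central_mod.
  rewrite (_ : q1 * _ = q1 * k * n2 + q1 * c2) ?modnMDl; last by ring.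
  rewrite mulnA -modnMml q1i2 modnMml mul1n central_mod.
  by apply: central_half => //; lia.
set r := p * c2 %% n2; set s := p * c2 %/ n2.
have r_lt : r < n2 by rewrite ltn_mod; lia.
have [u u_lt u_central] := central_in_progression r_lt g_gt2.
have [k sk] := coprime_affine_solution s u p_gt0 (ltnW (ltnW g_gt2)) p_coprime.
exists (c2 + n2 * k); rewrite q_central andbT.
have -> : p * (c2 + n2 * k) = r + n2 * (s + p * k).
  by rewrite mulnDr {1}(divn_eq (p * c2) n2) -/r -/s; ring.
by rewrite -central_mod mulnC modn_mul_split ?sk ?(modn_small u_lt) //; lia.
Qed.

Lemma central_multiplier_gcd (n p q : nat) : odd n -> 0 < p -> 0 < q -> 2 * q < n ->
  1 < gcdn q n -> coprime p (gcdn q n) ->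
  exists c, central n (p * c) && central n (q * c).
Proof.
move=> n_odd p_gt0 q_gt0 q_lt g_gt1 p_coprime; set g := gcdn q n in g_gt1 p_coprime.
have g_gt0 : 0 < g by lia.
have [n2 n_eq] : exists n2, n = g * n2 by exists (n %/ g); rewrite mulnC divnK ?dvdn_gcdr.
have [q1 q_eq] : exists q1, q = g * q1 by exists (q %/ g); rewrite mulnC divnK ?dvdn_gcdl.
have q1_coprime : coprime q1 n2.
  by rewrite /coprime -(eqn_pmul2l g_gt0) muln1 muln_gcdr -q_eq -n_eq.
clearbody g; subst n q; apply: central_multiplier_common_factor => //.
- by rewrite muln_gt0 in q_gt0; case/andP: q_gt0.
- by rewrite mulnCA ltn_pmul2l in q_lt.
Qed.

Lemma central_multiplier_primitive (n p q : nat) : odd n -> 0 < p -> p < q ->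
  2 * q < n -> gcdn p (gcdn q n) = 1 -> ~~ ((n == 5 * p) && (q == 2 * p)) ->
  exists c, central n (p * c) && central n (q * c).
Proof.
move=> n_odd p_gt0 pq q_lt pqn_coprime exc; have q_gt0 : 0 < q by lia.
case: (ltnP 1 (gcdn q n)) => [gq_gt1 | gq_le1].
  by apply: central_multiplier_gcd; rewrite // /coprime pqn_coprime.
case: (ltnP 1 (gcdn p n)) => [gp_gt1 | gp_le1].
  have p_lt : 2 * p < n by lia.
  have q_coprime : coprime q (gcdn p n) by rewrite /coprime gcdnCA pqn_coprime.
  have [c c_central] := central_multiplier_gcd n_odd q_gt0 p_gt0 p_lt gp_gt1 q_coprime.
  by exists c; rewrite andbC.
have n_ge7 : 7 <= n.
  have : n != 5 by apply: contraNneq exc => n5; rewrite n5; apply/andP; split; lia.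
  have : n %% 2 = 1 by rewrite modn2 n_odd.
  lia.
apply: central_multiplier_coprime => //.
by rewrite /coprime eqn_leq gp_le1 gcdn_gt0 p_gt0.
Qed.

Theorem central_multiplier (n p q : nat) : odd n -> 0 < p -> p < q -> 2 * q < n ->
  ~~ ((n == 5 * p) && (q == 2 * p)) ->
  exists c, central n (p * c) && central n (q * c).
Proof.
move=> n_odd p_gt0 pq q_lt exc; set e := gcdn p (gcdn q n).
have e_gt0 : 0 < e by rewrite gcdn_gt0 p_gt0.
have /and3P[/dvdnP[p' p_eq] /dvdnP[q' q_eq] /dvdnP[n' n_eq]] :
    [&& e %| p, e %| q & e %| n] by rewrite -!dvdn_gcd dvdnn.
have pqn'_coprime : gcdn p' (gcdn q' n') = 1.
  by apply/eqP; rewrite -(eqn_pmul2r e_gt0) mul1n !muln_gcdl -p_eq -q_eq -n_eq.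
clearbody e; subst p q n.
move: n_odd p_gt0 pq q_lt exc; rewrite oddM !ltn_pmul2r // mulnA ltn_pmul2r //.
rewrite muln_gt0 e_gt0 andbT => /andP[n'_odd _] p'_gt0 pq' q'_lt exc.
have exc' : ~~ ((n' == 5 * p') && (q' == 2 * p')).
  by apply: contra exc; rewrite !mulnA !eqn_pmul2r.
have [c c_central] :=
  central_multiplier_primitive n'_odd p'_gt0 pq' q'_lt pqn'_coprime exc'.
by exists c; rewrite (mulnC n' e) (mulnC p' e) (mulnC q' e) -!mulnA !central_scale.
Qed.

Lemma natdistC (i j : nat) : natdist i j = natdist j i.
Proof. by rewrite /natdist; case: (leqP i j); case: (leqP j i); lia. Qed.

Lemma circulant_sym (m : nat) (R : seq nat) : symmetric (@circulant m R).
Proof. by move=> u v; rewrite /circulant eq_sym natdistC. Qed.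

Lemma eq_circulant (m : nat) (R R' : seq nat) :
  R =i R' -> @circulant m R =2 @circulant m R'.
Proof. by move=> eqR u v; rewrite /circulant eqR. Qed.

Lemma eq_word_representable (T : finType) (E E' : rel T) :
  E =2 E' -> word_representable E -> word_representable E'.
Proof.
by move=> eqE [w [w_full w_rep]]; exists w; split=> // x y /w_rep; rewrite eqE.
Qed.

Lemma circulant_odd_jumps_word_representable (m : nat) (R : seq nat) :
  ~~ odd m -> all odd R -> word_representable (@circulant m R).
Proof.
move=> m_even R_odd; pose h (u : 'I_m) := u %% 2.
have parity u v : circulant R u v -> h u != h v.
  case/andP=> _ /(allP R_odd) k_odd.
  have : minn (natdist u v) (m - natdist u v) %% 2 = 1 by rewrite modn2 k_odd.
  have : m %% 2 = 0 by rewrite modn2 (negbTE m_even).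
  rewrite /h /natdist; have := ltn_ord u; have := ltn_ord v.
  by case: (leqP u v); lia.
apply: (semi_transitive_word_representable (h := h)) => //; first exact: circulant_sym.
apply: (@semi_transitive_of_span_window _ _ _ 1 1) => // u v /andP[_].
by have := ltn_mod v 2; rewrite /h; lia.
Qed.

Lemma natdist_mul_mod (N c u v : nat) : u < N -> v < N ->
  cdist N (c * natdist u v) <= natdist (c * u %% N) (c * v %% N)
    <= N - cdist N (c * natdist u v).
Proof.
wlog vu : u v / v <= u.
  move=> main u_lt v_lt; case: (leqP v u) => [vu | uv]; first exact: main.
  by rewrite natdistC [natdist (_ %% N) _]natdistC; apply: main (ltnW uv) v_lt u_lt.
move=> u_lt v_lt; have N_gt0 : 0 < N by lia.
have -> : natdist u v = u - v by rewrite /natdist; case: leqP; lia.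
rewrite /cdist -(subnKC vu) mulnDr -modnDm subnKC //.
have := ltn_mod (c * v) N; have := ltn_mod (c * (u - v)) N; rewrite N_gt0.
move: (c * v %% N) (c * (u - v) %% N) => A r r_lt A_lt.
case: (ltnP (A + r) N) => [small | big].
  by rewrite modn_small // /natdist; case: (leqP (A + r) A); lia.
by rewrite modn_between /natdist; [case: (leqP (A + r - N) A) | ]; lia.
Qed.

Lemma circulant_word_representable_of_central (N c : nat) (R : seq nat) :
  (forall k, k \in R -> central N (c * k)) -> word_representable (@circulant N R).
Proof.
move=> R_central; pose h (u : 'I_N) := c * u %% N.
have span u v : circulant R u v ->
    N < 4 * natdist (h u) (h v) /\ 4 * (N - natdist (h u) (h v)) > N.
  case/andP=> _ /R_central; rewrite /central; set d := natdist u v.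
  have d_le : d <= N.
    by rewrite /d /natdist; have := ltn_ord u; have := ltn_ord v; case: (leqP u v); lia.
  have -> : cdist N (c * minn d (N - d)) = cdist N (c * d).
    case: (leqP d (N - d)) => _ //; apply: cdist_opp.
    by rewrite -mulnDr subnK // modnMl mod0n.
  by rewrite /h; have := natdist_mul_mod c (ltn_ord u) (ltn_ord v); rewrite -/d; lia.
apply: (semi_transitive_word_representable (h := h)).
- exact: circulant_sym.
- move=> u v /span[span_lo _]; apply: contraTneq span_lo => ->.
  by rewrite /natdist leqnn subnn.
apply: (@semi_transitive_of_span_window _ _ _ (N %/ 4).+1 (N - (N %/ 4).+1)) => //.
  by lia.
move=> u v /andP[/span[lo hi] huv]; move: lo hi.
by rewrite /natdist (ltnW huv); lia.
Qed.

Lemma circulant_2_4_5_word_representable (n p : nat) : 0 < p -> n = 5 * p ->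
  word_representable (@circulant (2 * n) [:: 2 * p; 4 * p; n]).
Proof.
move=> p_gt0 n_eq; pose h (u : 'I_(2 * n)) : nat := u.
apply: (semi_transitive_word_representable (h := h)).
- exact: circulant_sym.
- by move=> u v /andP[u_neq_v _]; apply: contra_neq u_neq_v => /val_inj.
apply: (@semi_transitive_of_exact_spans _ _ _ p) => //; last exact: val_inj.
move=> u v huv; have u_neq_v : u != v by apply: contraTneq huv => ->; rewrite ltnn.
have := ltn_ord v; rewrite /circulant u_neq_v /natdist /h (ltnW huv) /= !inE => v_lt.
split=> [span | [s]].
  have : v - u = p * 2 \/ v - u = p * 4 \/ v - u = p * 5 \/
         v - u = p * 6 \/ v - u = p * 8.
    by move: span; lia.
  by case=> [|[|[|[|]]]] ->; [exists 2 | exists 4 | exists 5 | exists 6 | exists 8].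
by rewrite !inE => /or4P[| | | /orP[]] /eqP -> ->; lia.
Qed.

Lemma central_odd_multiple (n c : nat) : 0 < n -> odd c -> central (2 * n) (c * n).
Proof.
move=> n_gt0 c_odd; have c_eq : c = 2 * c./2 + 1.
  by rewrite -{1}(odd_double_half c) c_odd mul2n addnC.
have -> : c * n = c./2 * (2 * n) + n by rewrite {1}c_eq; ring.
by rewrite -central_mod modnMDl modn_small ?central_mod; [apply: central_window | ]; lia.
Qed.

Lemma circulant_even_jumps_word_representable (n p q : nat) :
  odd n -> 0 < p -> p < q -> 2 * q < n ->
  word_representable (@circulant (2 * n) [:: 2 * p; 2 * q; n]).
Proof.
move=> n_odd p_gt0 pq q_lt; have n_gt0 : 0 < n by lia.
have [/andP[/eqP n_eq /eqP ->] | exc] := boolP ((n == 5 * p) && (q == 2 * p)).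
  by rewrite mulnA; apply: circulant_2_4_5_word_representable.
have [c /andP[pc qc]] := central_multiplier n_odd p_gt0 pq q_lt exc.
pose c' := if odd c then c else c + n.
have c'_odd : odd c'.
  by rewrite /c'; case: ifPn => // c_even; rewrite oddD n_odd (negbTE c_even).
have c'_central k : central n (k * c) -> central (2 * n) (c' * (2 * k)).
  rewrite mulnCA central_scale // [c' * k]mulnC /c'; case: ifP => // _.
  by rewrite mulnDr central_addMn.
apply: (circulant_word_representable_of_central (c := c')) => k.
rewrite !inE => /or3P[] /eqP ->; [exact: c'_central | exact: c'_central |].
exact: central_odd_multiple.
Qed.

Theorem theorem17 (n a b : nat) :
  odd n -> 0 < a < n -> 0 < b < n -> a != b -> odd a = odd b ->
  word_representable (@circulant (2 * n) [:: a; b; n]).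
Proof.
wlog ab : a b / a < b.
  move=> main n_odd a_range b_range a_neq_b ab_parity.
  case: (ltngtP a b) => [ab | ba | a_eq_b]; first exact: main.
    apply: eq_word_representable (main b a ba _ _ _ _ _) => //; last by rewrite eq_sym.
    by apply: eq_circulant => k; rewrite !inE orbCA.
  by rewrite a_eq_b eqxx in a_neq_b.
move=> n_odd /andP[a_gt0 _] /andP[_ b_lt] _ ab_parity.
have [a_odd | a_even] := boolP (odd a).
  apply: circulant_odd_jumps_word_representable; first by rewrite oddM.
  by rewrite /= -ab_parity a_odd n_odd.
have half x : ~~ odd x -> x = 2 * x./2.
  by move=> x_even; rewrite -[LHS]odd_double_half (negbTE x_even) mul2n.
have a_eq := half a a_even; have b_eq : b = 2 * b./2 by apply: half; rewrite -ab_parity.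
rewrite a_eq b_eq; apply: circulant_even_jumps_word_representable => //;
  by move: a./2 b./2 a_eq b_eq => p q; lia.
Qed.
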